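(* Let $\mathfrak{H}$ be a Euclidean space and let $(\mathcal{X},\mathsf{S},\gamma,(\Lambda_{a})_{a\in\mathcal{A}})$ be a spectral decomposition system for $\mathfrak{H}$ such that the set $\{\Lambda_a\}_{a\in\mathcal{A}}$ is closed in $\mathscr{L}(\mathcal{X},\mathfrak{H})$. Let $D$ be a nonempty $\mathsf{S}$-invariant subset of $\mathcal{X}$ and let $X\in\mathfrak{H}$. Then \[ \operatorname{cone}\bigl(X-\operatorname{Proj}_{\gamma^{-1}(D)}X\bigr)=\bigl\{\Lambda_a y : y\in\operatorname{cone}\bigl(\gamma(X)-\operatorname{Proj}_D\gamma(X)\bigr)\ \text{and}\ a\in\mathcal{A}_X\bigr\}. \]
   Context: A Euclidean space is a finite-dimensional real Hilbert space; $\mathscr{L}(\mathcal{X},\mathfrak{H})$ carries the operator-norm topology. A spectral decomposition system for a Euclidean space $\mathfrak{H}$ is a tuple $(\mathcal{X},\mathsf{S},\gamma,(\Lambda_a)_{a\in\mathcal{A}})$ where $\mathcal{X}$ is a Euclidean space, $\mathsf{S}$ is a group acting on $\mathcal{X}$ such that each map $x\mapsto \mathsf{s}\cdot x$ is a linear isometry, $\gamma\colon\mathfrak{H}\to\mathcal{X}$ is a mapping, and each $\Lambda_a\colon\mathcal{X}\to\mathfrak{H}$ is a linear isometry, such that: [A] there exists a mapping $\tau\colon\mathcal{X}\to\mathcal{X}$ with $\tau(\mathsf{s}\cdot x)=\tau(x)$ for all $\mathsf{s},x$, $\tau(x)\in\mathsf{S}\cdot x$ for all $x$, and $\gamma\circ\Lambda_a=\tau$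 for all $a\in\mathcal{A}$; [B] for every $X\in\mathfrak{H}$ there exists $a\in\mathcal{A}$ with $X=\Lambda_a\gamma(X)$; [C] $\langle X,Y\rangle\le\langle\gamma(X),\gamma(Y)\rangle$ for all $X,Y\in\mathfrak{H}$. $\mathcal{A}_X=\{a\in\mathcal{A}:X=\Lambda_a\gamma(X)\}$. A set $D\subset\mathcal{X}$ is $\mathsf{S}$-invariant if $\mathsf{s}\cdot x\in D$ for all $x\in D$, $\mathsf{s}\in\mathsf{S}$. For a nonempty subset $C$ of a Euclidean space $\mathcal{H}$ and $x\in\mathcal{H}$, $\operatorname{Proj}_C x=\{y\in C:\|x-y\|=\inf_{z\in C}\|x-z\|\}$ (possibly empty). For a set $E$, $\operatorname{cone}E=\bigcup_{\alpha>0}\alpha E$, and $x-E=\{x-e:e\in E\}$. *)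

From HB Require Import structures.
From mathcomp Require Import all_boot all_order all_algebra.
From mathcomp Require Import all_classical all_reals.
Set Implicit Arguments. Unset Strict Implicit. Unset Printing Implicit Defensive.
Import Order.TTheory GRing.Theory Num.Theory.
Local Open Scope classical_set_scope.
Local Open Scope ring_scope.

(* Euclidean spaces of dimension n are modelled as row vectors 'rV[R]_n
   with the standard inner product; linear maps X -> H as matrices acting
   on the right: x |-> x *m L. *)

Definition edot (R : realType) (n : nat) (x y : 'rV[R]_n) : R := (x *m y^T) 0 0.
Definition enorm (R : realType) (n : nat) (x : 'rV[R]_n) : R := Num.sqrt (edot x x).

Definition Proj (R : realType) (n : nat) (C : set 'rV[R]_n) (x : 'rV[R]_n)
  : set 'rV[R]_n :=
  [set y | C y /\ enorm (x - y) = inf [set enorm (x - z) | z in C]].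

Definition cone (R : realType) (n : nat) (E : set 'rV[R]_n) : set 'rV[R]_n :=
  [set v | exists alpha : R, 0 < alpha /\ exists2 e, E e & v = alpha *: e].

Definition minus_set (R : realType) (n : nat) (x : 'rV[R]_n) (E : set 'rV[R]_n)
  : set 'rV[R]_n := [set x - e | e in E].

Definition opnorm (R : realType) (m n : nat) (L : 'M[R]_(m, n)) : R :=
  sup [set enorm (x *m L) | x in [set x : 'rV[R]_m | enorm x <= 1]].

Definition opnorm_closed (R : realType) (m n : nat) (E : set 'M[R]_(m, n)) : Prop :=
  forall L : 'M[R]_(m, n),
    (forall e : R, 0 < e -> exists2 L', E L' & opnorm (L - L') < e) -> E L.

Definition isometric_group_action (R : realType) (m : nat) (S : Type)
  (mul : S -> S -> S) (one : S) (inv : S -> S)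
  (act : S -> 'rV[R]_m -> 'rV[R]_m) : Prop :=
  [/\ (forall a b c, mul a (mul b c) = mul (mul a b) c)
      /\ (forall a, mul one a = a /\ mul a one = a)
      /\ (forall a, mul (inv a) a = one /\ mul a (inv a) = one),
      (forall x, act one x = x),
      (forall s t x, act (mul s t) x = act s (act t x)),
      (forall s (c : R) x y, act s (c *: x + y) = c *: act s x + act s y)
    & (forall s x, enorm (act s x) = enorm x)].

Definition orbit (R : realType) (m : nat) (S : Type)
  (act : S -> 'rV[R]_m -> 'rV[R]_m) (x : 'rV[R]_m) : set 'rV[R]_m :=
  [set act s x | s in [set: S]].

Definition S_invariant (R : realType) (m : nat) (S : Type)
  (act : S -> 'rV[R]_m -> 'rV[R]_m) (D : set 'rV[R]_m) : Prop :=
  forall x s, D x -> D (act s x).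

Definition spectral_decomposition_system (R : realType) (m n : nat)
  (S : Type) (mul : S -> S -> S) (one : S) (inv : S -> S)
  (act : S -> 'rV[R]_m -> 'rV[R]_m)
  (gamma : 'rV[R]_n -> 'rV[R]_m) (A : Type) (Lambda : A -> 'M[R]_(m, n)) : Prop :=
  [/\ isometric_group_action mul one inv act,
      (forall a x, enorm (x *m Lambda a) = enorm x),
      (* [A] *)
      (exists tau : 'rV[R]_m -> 'rV[R]_m,
         [/\ (forall s x, tau (act s x) = tau x),
             (forall x, orbit act x (tau x))
           & (forall a x, gamma (x *m Lambda a) = tau x)]),
      (* [B] *)
      (forall X, exists a, X = gamma X *m Lambda a)
    & (* [C] *)
      (forall X Y, edot X Y <= edot (gamma X) (gamma Y))].

Definition A_of (R : realType) (m n : nat) (gamma : 'rV[R]_n -> 'rV[R]_m)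
  (A : Type) (Lambda : A -> 'M[R]_(m, n)) (X : 'rV[R]_n) : set A :=
  [set a | X = gamma X *m Lambda a].

From HB Require Import structures.
From mathcomp Require Import all_boot all_order all_algebra.
From mathcomp Require Import all_classical all_reals.
From mathcomp Require Import lra.
Set Implicit Arguments. Unset Strict Implicit.
Import Order.TTheory GRing.Theory Num.Theory.
Local Open Scope classical_set_scope.
Local Open Scope ring_scope.

(* By [C] gamma is 1-Lipschitz, while by [A] and [B] each p in D is carried by
   Lambda_b (b in A_X) to a point of gamma^-1(D) at distance ||gamma X - p||
   from X; hence d(X, gamma^-1(D)) = d(gamma X, D).  A projection Y of X thus
   satisfies ||gamma X - gamma Y|| = ||X - Y||, i.e. <X, Y> = <gamma X, gamma Y>,
   and [C] applied to X + Y then gives a simultaneous decomposition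
   X = gamma X Lambda_a, Y = gamma Y Lambda_a, so that
   X - Y = (gamma X - gamma Y) Lambda_a with gamma Y in Proj_D (gamma X).
   Conversely p Lambda_a is a projection of X for all p in Proj_D (gamma X)
   and a in A_X. *)

Section InnerProduct.
Variable R : realType.

Lemma edotE n (x y : 'rV[R]_n) : edot x y = \sum_i x 0 i * y 0 i.
Proof. by rewrite /edot !mxE; apply: eq_bigr => i _; rewrite mxE. Qed.

Lemma edotC n (x y : 'rV[R]_n) : edot x y = edot y x.
Proof. by rewrite !edotE; apply: eq_bigr => i _; rewrite mulrC. Qed.

Lemma edotDl n (x y z : 'rV[R]_n) : edot (x + y) z = edot x z + edot y z.
Proof. by rewrite !edotE -big_split; apply: eq_bigr => i _; rewrite mxE mulrDl. Qed.

Lemma edotNl n (x z : 'rV[R]_n) : edot (- x) z = - edot x z.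
Proof.
by rewrite !edotE -sumrN; apply: eq_bigr => i _; rewrite mxE mulNr.
Qed.

Lemma edotBl n (x y z : 'rV[R]_n) : edot (x - y) z = edot x z - edot y z.
Proof. by rewrite edotDl edotNl. Qed.

Lemma edotDr n (x y z : 'rV[R]_n) : edot z (x + y) = edot z x + edot z y.
Proof. by rewrite edotC edotDl !(edotC z). Qed.

Lemma edotBr n (x y z : 'rV[R]_n) : edot z (x - y) = edot z x - edot z y.
Proof. by rewrite edotC edotBl !(edotC z). Qed.

Lemma edotDD n (x y : 'rV[R]_n) :
  edot (x + y) (x + y) = edot x x + edot x y *+ 2 + edot y y.
Proof. by rewrite edotDl !edotDr (edotC y x) mulr2n !addrA. Qed.

Lemma edotBB n (x y : 'rV[R]_n) :
  edot (x - y) (x - y) = edot x x - edot x y *+ 2 + edot y y.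
Proof. by rewrite edotBl !edotBr (edotC y x) mulr2n; lra. Qed.

Lemma edot_ge0 n (x : 'rV[R]_n) : 0 <= edot x x.
Proof. by rewrite edotE sumr_ge0 // => i _; rewrite -expr2 sqr_ge0. Qed.

Lemma edot_eq0 n (x : 'rV[R]_n) : edot x x = 0 -> x = 0.
Proof.
rewrite edotE => /psumr_eq0P x0; apply/rowP => i; rewrite mxE.
have /eqP := x0 (fun j _ => sqr_ge0 (x 0 j)) i isT.
by rewrite mulf_eq0 => /orP[] /eqP.
Qed.

Lemma edot_le0_eq0 n (x : 'rV[R]_n) : edot x x <= 0 -> x = 0.
Proof. by move=> le0; apply: edot_eq0; apply/eqP; rewrite eq_le le0 edot_ge0. Qed.

Lemma enorm_ge0 n (x : 'rV[R]_n) : 0 <= enorm x.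
Proof. exact: sqrtr_ge0. Qed.

Lemma enorm_le k n (x : 'rV[R]_k) (y : 'rV[R]_n) :
  (enorm x <= enorm y) = (edot x x <= edot y y).
Proof. by rewrite /enorm ler_sqrt ?edot_ge0. Qed.

Lemma enorm_eq k n (x : 'rV[R]_k) (y : 'rV[R]_n) :
  enorm x = enorm y <-> edot x x = edot y y.
Proof.
rewrite /enorm; split=> [/eqP|->] //.
by rewrite eqr_sqrt ?edot_ge0 // => /eqP.
Qed.

Lemma isometry_edot m n (L : 'M[R]_(m, n)) :
  (forall x, enorm (x *m L) = enorm x) ->
  forall x y, edot (x *m L) (y *m L) = edot x y.
Proof.
move=> isoL x y.
have sqL z : edot (z *m L) (z *m L) = edot z z by apply/enorm_eq.
by have := sqL (x + y); rewrite mulmxDl !edotDD !sqL; lra.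
Qed.

End InnerProduct.

Definition dist_to (R : realType) n (C : set 'rV[R]_n) (x : 'rV[R]_n) : R :=
  inf [set enorm (x - z) | z in C].

Lemma dist_to_le (R : realType) n (C : set 'rV[R]_n) x z :
  C z -> dist_to C x <= enorm (x - z).
Proof.
move=> Cz; apply: ge_inf; last by exists z.
by exists 0 => _ [y _ <-]; apply: enorm_ge0.
Qed.

Section SpectralDecomposition.
Variables (R : realType) (m n : nat) (gamma : 'rV[R]_n -> 'rV[R]_m).
Variables (A : Type) (Lambda : A -> 'M[R]_(m, n)) (tau : 'rV[R]_m -> 'rV[R]_m).
Hypothesis Lambda_iso : forall a x, enorm (x *m Lambda a) = enorm x.
Hypothesis gamma_Lambda : forall a x, gamma (x *m Lambda a) = tau x.
Hypothesis gammaK : forall X, exists a, X = gamma X *m Lambda a.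
Hypothesis edot_le_gamma : forall X Y, edot X Y <= edot (gamma X) (gamma Y).

Lemma gamma_LambdaK a X : gamma (gamma X *m Lambda a) = gamma X.
Proof. by have [b {2}->] := gammaK X; rewrite !gamma_Lambda. Qed.

Lemma edot_gamma X : edot (gamma X) (gamma X) = edot X X.
Proof. by have [a {3 4}->] := gammaK X; rewrite isometry_edot. Qed.

Lemma enorm_gammaB X Y : enorm (gamma X - gamma Y) <= enorm (X - Y).
Proof. by rewrite enorm_le !edotBB !edot_gamma; have := edot_le_gamma X Y; lra. Qed.

Lemma enorm_gammaB_eq X Y :
  enorm (gamma X - gamma Y) = enorm (X - Y) -> edot X Y = edot (gamma X) (gamma Y).
Proof. by move/enorm_eq; rewrite !edotBB !edot_gamma; lra. Qed.

(* Expanding ||gamma(X+Y) - gamma X - gamma Y||^2 and bounding each cross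
   term with [C] leaves 2(<X,Y> - <gamma X, gamma Y>) <= 0. *)
Lemma gammaD_of_edot_eq X Y :
  edot X Y = edot (gamma X) (gamma Y) -> gamma (X + Y) = gamma X + gamma Y.
Proof.
move=> eqXY; apply/eqP; rewrite -subr_eq0; apply/eqP/edot_le0_eq0.
have leX := edot_le_gamma (X + Y) X; have leY := edot_le_gamma (X + Y) Y.
move: leX leY; rewrite edotBB edotDD edotDr !edotDl !edot_gamma edotDD.
by rewrite (edotC Y X); lra.
Qed.

Lemma simultaneous_decomposition X Y :
  edot X Y = edot (gamma X) (gamma Y) ->
  exists a, X = gamma X *m Lambda a /\ Y = gamma Y *m Lambda a.
Proof.
move=> eqXY; have [a XYa] := gammaK (X + Y).
rewrite gammaD_of_edot_eq // mulmxDl in XYa.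
set P := gamma X *m Lambda a in XYa *; set Q := gamma Y *m Lambda a in XYa *.
have QY : Q - Y = X - P.
  have -> : Q = X + Y - P by rewrite XYa addrC addKr.
  by rewrite addrAC addrK.
(* [C] gives <X, Q>, <P, Y> <= <X, Y> = <P, Q>, so
   ||Q - Y||^2 = <Q - Y, X - P> <= 0. *)
have leXQ := edot_le_gamma X Q; have lePY := edot_le_gamma P Y.
rewrite gamma_LambdaK -eqXY in leXQ; rewrite gamma_LambdaK -eqXY in lePY.
have PQ : edot P Q = edot X Y by rewrite isometry_edot.
have /edot_le0_eq0/subr0_eq QYeq : edot (Q - Y) (Q - Y) <= 0.
  by rewrite {1}QY edotBl !edotBr; lra.
exists a; split; last by rewrite -/Q QYeq.
by apply/subr0_eq; rewrite -/P -QY QYeq subrr.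
Qed.

Variable D : set 'rV[R]_m.
Hypothesis D_tau : forall p, D p -> D (tau p).
Hypothesis D_neq0 : D !=set0.

Lemma dist_to_preimage X : dist_to (gamma @^-1` D) X = dist_to D (gamma X).
Proof.
have [[p0 Dp0] [b Xb]] := (D_neq0, gammaK X).
have preD p : D p -> (gamma @^-1` D) (p *m Lambda b).
  by move=> Dp; rewrite /preimage /= gamma_Lambda; apply: D_tau.
apply/eqP; rewrite eq_le; apply/andP; split.
- apply: lb_le_inf; first by exists (enorm (gamma X - p0)), p0.
  move=> _ [p Dp <-]; apply: le_trans (dist_to_le X (preD p Dp)) _.
  by rewrite {1}Xb -mulmxBl Lambda_iso.
- apply: lb_le_inf.
    by exists (enorm (X - p0 *m Lambda b)), (p0 *m Lambda b); first exact: preD.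
  move=> _ [Z DZ <-]; apply: le_trans (enorm_gammaB X Z).
  exact: dist_to_le.
Qed.

Lemma Proj_preimage_Lambda X p a :
  Proj D (gamma X) p -> A_of gamma Lambda X a ->
  Proj (gamma @^-1` D) X (p *m Lambda a).
Proof.
move=> [Dp dp] Xa; split; first by rewrite /preimage /= gamma_Lambda; apply: D_tau.
by rewrite [X in X - _]Xa -mulmxBl Lambda_iso dp -!/(dist_to _ _) dist_to_preimage.
Qed.

Lemma Proj_preimage_decomposition X Y :
  Proj (gamma @^-1` D) X Y ->
  exists a, [/\ Proj D (gamma X) (gamma Y), A_of gamma Lambda X a
              & X - Y = (gamma X - gamma Y) *m Lambda a].
Proof.
move=> [DgY dY]; rewrite -/(dist_to _ _) dist_to_preimage in dY.
have le1 := dist_to_le (gamma X) DgY; have le2 := enorm_gammaB X Y.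
have eqXY : enorm (gamma X - gamma Y) = enorm (X - Y) by lra.
have [a [Xa Ya]] := simultaneous_decomposition (enorm_gammaB_eq eqXY).
exists a; split=> //; last by rewrite mulmxBl -Xa -Ya.
by split=> //; rewrite -/(dist_to _ _); lra.
Qed.

End SpectralDecomposition.

Theorem proposition3p3 (R : realType) (m n : nat)
  (S : Type) (mul : S -> S -> S) (one : S) (inv : S -> S)
  (act : S -> 'rV[R]_m -> 'rV[R]_m)
  (gamma : 'rV[R]_n -> 'rV[R]_m) (A : Type) (Lambda : A -> 'M[R]_(m, n)) :
  spectral_decomposition_system mul one inv act gamma Lambda ->
  opnorm_closed (range Lambda) ->
  forall D : set 'rV[R]_m, D !=set0 -> S_invariant act D ->
  forall X : 'rV[R]_n,
    cone (minus_set X (Proj (gamma @^-1` D) X)) =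
    [set v | exists y, exists a,
       [/\ cone (minus_set (gamma X) (Proj D (gamma X))) y,
           A_of gamma Lambda X a & v = y *m Lambda a]].
Proof.
case=> _ iso [tau [_ tau_orbit gamma_Lambda] gammaK edot_le] _ D D_neq0 D_inv X.
have D_tau p : D p -> D (tau p).
  by move=> Dp; have [s _ <-] := tau_orbit p; exact: D_inv.
apply/seteqP; split=> v.
- case=> al [al0 [_ [Y PY <-] ->]].
  have [a [PgY Xa XY]] :=
    Proj_preimage_decomposition iso gamma_Lambda gammaK edot_le D_tau D_neq0 PY.
  exists (al *: (gamma X - gamma Y)), a.
  split=> //; last by rewrite -scalemxAl XY.
  by exists al; split=> //; exists (gamma X - gamma Y); first exists (gamma Y).
- case=> _ [a [[al [al0 [_ [p Pp <-] ->]]] Xa ->]].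
  exists al; split=> //.
  exists (X - p *m Lambda a); last by rewrite -scalemxAl mulmxBl -Xa.
  by exists (p *m Lambda a); first exact: Proj_preimage_Lambda.
Qed.
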